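(* Let $M$ be a centrally endo-AIP right $R$-module, $S=\mathrm{End}_R(M)$, and let $N$ be a fully invariant submodule of $M$ with $T=\mathrm{End}_R(N)$. If every $\psi\in T$ extends to some $\bar\psi\in S$ (i.e. $\bar\psi|_N=\psi$), then $N$ is a centrally endo-AIP module.
   Context: For a module $X$ with $E=\mathrm{End}_R(X)$ and $K\le X$, $l_E(K)=\{\phi\in E:\phi(K)=0\}$. An ideal $I$ of $E$ is centrally s-unital if for every $a\in I$ there is $z\in I$ central in $E$ with $az=a$. $X$ is centrally endo-AIP if $l_E(K)$ is a centrally s-unital ideal of $E$ for every fully invariant submodule $K$ of $X$. *)

From HB Require Import structures.
From mathcomp Require Import all_boot all_order all_algebra.
Set Implicit Arguments. Unset Strict Implicit. Unset Printing Implicit Defensive.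
Import GRing.Theory.
Local Open Scope ring_scope.

(* Endomorphisms of an R-module X are the R-linear maps {linear X -> X};
   the product in E = End_R(X) is composition, (phi * psi) x = phi (psi x). *)

Definition fully_invariant (R : pzRingType) (X : lmodType R) (K : {pred X}) : Prop :=
  submod_closed K /\ forall (phi : {linear X -> X}) (x : X), x \in K -> phi x \in K.

Definition in_lann (R : pzRingType) (X : lmodType R) (K : {pred X})
  (phi : {linear X -> X}) : Prop := forall x : X, x \in K -> phi x = 0.

Definition central_endo (R : pzRingType) (X : lmodType R) (z : {linear X -> X}) : Prop :=
  forall (phi : {linear X -> X}) (x : X), z (phi x) = phi (z x).

Definition lann_centrally_s_unital (R : pzRingType) (X : lmodType R) (K : {pred X}) : Prop :=
  forall a : {linear X -> X}, in_lann K a ->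
    exists z : {linear X -> X}, [/\ in_lann K z, central_endo z & forall x, a (z x) = a x].

Definition centrally_endo_AIP (R : pzRingType) (X : lmodType R) : Prop :=
  forall K : {pred X}, fully_invariant K -> lann_centrally_s_unital K.

Section SubModule.
Variables (R : pzRingType) (M : lmodType R) (N : submodClosed M).
Definition submod_type : Type := {x : M | x \in N}.
HB.instance Definition _ := [isSub for (@sval M (fun x => x \in N)) : submod_type -> M].
HB.instance Definition _ := [Choice of submod_type by <:].
HB.instance Definition _ := [SubChoice_isSubLmodule of submod_type by <:].
End SubModule.

From HB Require Import structures.
From mathcomp Require Import all_boot all_order all_algebra.
Import GRing.Theory.
Local Open Scope ring_scope.

(* Every fully invariant K of N is also fully invariant in M, since each
   endomorphism of M restricts to one of N.  An element a of l_T(K) extends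
   to some abar in l_S(K); a central s-unit z for abar in l_S(K) restricts to
   an element of l_T(K) that is central in T because every endomorphism of N
   extends to M, and a (z|_N) = a. *)

Section Restriction.
Context {R : pzRingType} {M : lmodType R} {N : submodClosed M}.

Section RestrictEndo.
Context {f : {linear M -> M}} (fN : forall x, x \in N -> f x \in N).

Definition restr_endo (y : submod_type N) : submod_type N :=
  Sub (f (val y)) (fN _ (valP y)).

Lemma restr_endo_val y : val (restr_endo y) = f (val y).
Proof. exact: SubK. Qed.

Lemma restr_endo_is_linear : linear restr_endo.
Proof. by move=> c u v; apply: val_inj; rewrite !restr_endo_val /= linearP. Qed.

HB.instance Definition _ :=
  GRing.isLinear.Build _ _ _ _ restr_endo restr_endo_is_linear.

End RestrictEndo.

Definition val_image (K : {pred submod_type N}) : {pred M} :=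
  fun m => oapp (fun y => y \in K) false (insub m).

Lemma val_imageP (K : {pred submod_type N}) m :
  reflect (exists2 y, y \in K & val y = m) (m \in val_image K).
Proof.
rewrite /in_mem /= /val_image; case: insubP => [y _ <-|mN].
  by apply: (iffP idP) => [yK|[y' y'K /val_inj <-//]]; exists y.
by constructor=> -[y _ ym]; move: mN; rewrite -ym (valP y).
Qed.

Lemma val_image_val (K : {pred submod_type N}) y : (val y \in val_image K) = (y \in K).
Proof.
by apply/val_imageP/idP => [[y' y'K /val_inj <-//]|yK]; exists y.
Qed.

Lemma fully_invariant_val_image {K : {pred submod_type N}} :
  fully_invariant (mem N) -> fully_invariant K -> fully_invariant (val_image K).
Proof.
move=> [_ fiN] [[K0 KZ] fiK]; split.
  split=> [|c _ _ /val_imageP[u uK <-] /val_imageP[v vK <-]].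
    by apply/val_imageP; exists 0.
  by apply/val_imageP; exists (c *: u + v) => //; apply: KZ.
move=> f _ /val_imageP[y yK <-]; apply/val_imageP.
by exists (restr_endo (fiN f) y); [apply: fiK | rewrite restr_endo_val].
Qed.

Lemma in_lann_extension {K : {pred submod_type N}}
    {a : {linear submod_type N -> submod_type N}} {abar : {linear M -> M}} :
  (forall y, abar (val y) = val (a y)) -> in_lann K a -> in_lann (val_image K) abar.
Proof. by move=> ext aK _ /val_imageP[y yK <-]; rewrite ext aK. Qed.

Lemma in_lann_restr_endo (K : {pred submod_type N}) (z : {linear M -> M})
    (zN : forall x, x \in N -> z x \in N) :
  in_lann (val_image K) z -> in_lann K (restr_endo zN).
Proof.
by move=> zK y yK; apply: val_inj; rewrite restr_endo_val zK ?val_image_val.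
Qed.

Hypothesis extendN : forall psi : {linear submod_type N -> submod_type N},
  exists psibar : {linear M -> M}, forall y, psibar (val y) = val (psi y).

Lemma central_endo_restr_endo (z : {linear M -> M})
    (zN : forall x, x \in N -> z x \in N) :
  central_endo z -> central_endo (restr_endo zN).
Proof.
move=> zC psi y; have [psibar ext] := extendN psi; apply: val_inj.
by rewrite !restr_endo_val -!ext restr_endo_val zC.
Qed.

End Restriction.

Theorem proposition2p8 (R : pzRingType) (M : lmodType R^c) (N : submodClosed M) :
  centrally_endo_AIP M ->
  fully_invariant (mem N) ->
  (forall psi : {linear submod_type N -> submod_type N},
     exists psibar : {linear M -> M},
       forall y : submod_type N, psibar (val y) = val (psi y)) ->
  centrally_endo_AIP (submod_type N).
Proof.
move=> aipM fiN extendN K fiK a aK.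
have [abar ext] := extendN a.
have [z [zK zC za]] := aipM _ (fully_invariant_val_image fiN fiK) abar
  (in_lann_extension ext aK).
exists (restr_endo (fiN.2 z)); split.
- exact: in_lann_restr_endo.
- exact: central_endo_restr_endo.
- by move=> y; apply: val_inj; rewrite -!ext restr_endo_val za.
Qed.
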